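(* Let $G$ be a weakly-reversible chemical reaction network in $s$ species and let $Z\subseteq\{1,\dots,s\}$ be nonempty. Then $Z$ is a siphon of $G$ if and only if there exists $\alpha\in\mathbb{R}^s_{\ge0}\cap V_{\mathbb{R}}(\mathcal{E}_G)$ with $Z=\{i:\alpha_i=0\}$. Moreover, $Z$ is a critical siphon if and only if there exists such an $\alpha$ for which, in addition, the invariant polyhedron containing $\alpha$ intersects $\mathbb{R}^s_{>0}$.
   Context: A chemical reaction network (CRN) consists of positive integers $s,n$, a finite directed graph $G$ with vertex set $\{1,\dots,n\}$ and edge set $E(G)$, and an injective labeling of vertex $i$ by a monic monomial $\psi_i=\prod_{j=1}^s x_j^{y_{ij}}$, $y_i=(y_{i1},\dots,y_{is})$. $G$ is weakly-reversible iff each connected component is strongly connected. The associated event-system $\mathcal{E}_G$ is the set of binomials $\psi_i-\psi_j$, one for each pair $\{i,j\}$ with $(i,j)\in E(G)$ or $(j,i)\in E(G)$; $V_{\mathbb{R}}(\mathcal{E}_G)\subseteq\mathbb{R}^s$ is its real zero set. The stoichiometric subspace is $S_G=\mathrm{span}\{y_i-y_j:(i,j)\in E(G)\}$, and for $x\in\mathbb{R}^s_{\ge0}$ the invariant polyhedron containing $x$ is $(x+S_G)\cap\mathbb{R}^s_{\ge0}$. A nonempty $Z\subseteq\{1,\dots,s\}$ is a siphon iff for every $(i,j)\in E(G)$, if $x_k\mid\psi_j$ for some $k\in Z$ then $x_l\mid\psi_i$ for some $l\in Z$. A siphon $Z$ is critical iff there is $z\in\mathbb{R}^s_{\ge0}$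 with $Z=\{i:z_i=0\}$ such that the invariant polyhedron containing $z$ meets $\mathbb{R}^s_{>0}$. *)

From HB Require Import structures.
From mathcomp Require Import all_boot all_order all_algebra.
From mathcomp Require Import reals.
Set Implicit Arguments. Unset Strict Implicit. Unset Printing Implicit Defensive.
Import Order.TTheory GRing.Theory Num.Theory.
Local Open Scope ring_scope.

(* A CRN: s species, n complexes, directed graph G : rel 'I_n on vertices
   {0,..,n-1}, and complex i labelled by the monic monomial
   psi_i = prod_j x_j ^ (y i j); the labelling is injective (injective y). *)

Section CRN.
Variables (R : realType) (s n : nat).
Implicit Types (G : rel 'I_n) (y : 'I_n -> 'I_s -> nat) (x : 'I_s -> R).

Definition psi y (i : 'I_n) x : R := \prod_(j < s) x j ^+ y i j.

Definition undirected G : rel 'I_n := fun i j => G i j || G j i.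

Definition weakly_reversible G : Prop :=
  forall i j, connect (undirected G) i j -> connect G i j.

Definition in_event_variety G y x : Prop :=
  forall i j, undirected G i j -> psi y i x - psi y j x = 0.

Definition nonneg x : Prop := forall k, 0 <= x k.
Definition positive x : Prop := forall k, 0 < x k.

Definition in_stoich G y (v : 'I_s -> R) : Prop :=
  exists c : 'I_n -> 'I_n -> R,
    forall k, v k = \sum_(i < n) \sum_(j < n | G i j)
                      c i j * ((y i k)%:R - (y j k)%:R).

Definition inv_polyhedron G y x (w : 'I_s -> R) : Prop :=
  in_stoich G y (fun k => w k - x k) /\ nonneg w.

Definition polyhedron_meets_pos G y x : Prop :=
  exists w, inv_polyhedron G y x w /\ positive w.

Definition zero_set x : {set 'I_s} := [set k | x k == 0].

(* siphon: x_k | psi_j iff y j k >= 1 *)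
Definition siphon G y (Z : {set 'I_s}) : Prop :=
  Z != set0 /\
  forall i j, G i j ->
    (exists2 k, k \in Z & (0 < y j k)%N) ->
    (exists2 l, l \in Z & (0 < y i l)%N).

Definition critical_siphon G y (Z : {set 'I_s}) : Prop :=
  siphon G y Z /\
  exists z, nonneg z /\ Z = zero_set z /\ polyhedron_meets_pos G y z.

End CRN.

From HB Require Import structures.
From mathcomp Require Import all_boot all_order all_algebra.
From mathcomp Require Import reals.
From mathcomp Require Import lra.
Import Order.TTheory GRing.Theory Num.Theory.
Local Open Scope ring_scope.

(* A monomial psi_i vanishes at x exactly when complex i involves a species
   of the zero set of x, so the siphon condition is the event-system
   condition read off on zero sets; conversely the 0/1 indicator of a siphon
   takes the same value on both ends of every edge, because in a weakly
   reversible network every edge lies on a cycle.  Criticality transfers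
   between nonnegative points whose zero sets are nested: moving from alpha
   a small step along w - z, with w a positive point of the polyhedron of z,
   stays in alpha + S_G and becomes positive. *)

Lemma connect_back_closed (T : finType) (e : rel T) (a : pred T) :
  (forall x y, e x y -> a y -> a x) -> forall x y, connect e x y -> a y -> a x.
Proof.
move=> cl_a x _ /connectP[p e_p ->].
by elim: p x e_p => //= z p IHp x /andP[/cl_a cl_x /IHp ay /ay /cl_x].
Qed.

Section Network.
Context {R : realType} {s n : nat} {G : rel 'I_n} {y : 'I_n -> 'I_s -> nat}.

Definition involves (Z : {set 'I_s}) (i : 'I_n) : bool :=
  [exists k in Z, (0 < y i k)%N].

Lemma psi_eq0 (x : 'I_s -> R) i : (psi y i x == 0) = involves (zero_set x) i.
Proof.
apply/prodf_eq0/exists_inP => [[k _]|[k]].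
  by rewrite expf_eq0 => /andP[yik xk0]; exists k; rewrite ?inE.
by rewrite inE => xk0 yik; exists k => //; rewrite expf_eq0 xk0 yik.
Qed.

Lemma siphon_zero_set (alpha : 'I_s -> R) :
  zero_set alpha != set0 -> in_event_variety G y alpha ->
  siphon G y (zero_set alpha).
Proof.
move=> Z_neq0 ev_alpha; split => // i j Gij /exists_inP inv_j.
have /eqP psi_j0 : psi y j alpha == 0 by rewrite psi_eq0.
suff : involves (zero_set alpha) i by move/exists_inP.
have := ev_alpha i j; rewrite /undirected Gij psi_j0 subr0 => /(_ isT) psi_i0.
by rewrite -psi_eq0 psi_i0.
Qed.

Lemma siphon_involves_edge {Z : {set 'I_s}} :
  weakly_reversible G -> siphon G y Z ->
  forall {i j}, G i j -> involves Z i = involves Z j.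
Proof.
move=> wr_G [_ siphZ].
have back i j : G i j -> involves Z j -> involves Z i.
  by move=> Gij /exists_inP /(siphZ i j Gij) /exists_inP.
move=> i j Gij; apply/idP/idP; last exact: back.
apply: (@connect_back_closed _ _ (involves Z) back); apply: wr_G.
by apply: connect1; rewrite /undirected Gij orbT.
Qed.

Definition indicator (Z : {set 'I_s}) : 'I_s -> R :=
  fun k => if k \in Z then 0 else 1.

Lemma indicator_nonneg Z : nonneg (indicator Z).
Proof. by move=> k; rewrite /indicator; case: ifP. Qed.

Lemma zero_set_indicator Z : zero_set (indicator Z) = Z.
Proof.
by apply/setP => k; rewrite inE /indicator; case: ifP; rewrite ?eqxx ?oner_eq0.
Qed.

Lemma psi_indicator Z i : psi y i (indicator Z) = (~~ involves Z i)%:R.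
Proof.
case inv_i: (involves Z i) => /=.
  by apply/eqP; rewrite psi_eq0 zero_set_indicator.
apply: big1 => k _; rewrite /indicator; case: ifP => [kZ|_]; last exact: expr1n.
case: (posnP (y i k)) => [->|yik]; first exact: expr0.
suff : involves Z i by rewrite inv_i.
by apply/exists_inP; exists k.
Qed.

Lemma indicator_event_variety Z :
  weakly_reversible G -> siphon G y Z -> in_event_variety G y (indicator Z).
Proof.
move=> wr_G siphZ i j /orP[Gij|Gji]; rewrite !psi_indicator.
  by rewrite (siphon_involves_edge wr_G siphZ Gij) subrr.
by rewrite (siphon_involves_edge wr_G siphZ Gji) subrr.
Qed.

Lemma in_stoichZ (t : R) {v : 'I_s -> R} :
  in_stoich G y v -> in_stoich G y (fun k => t * v k).
Proof.
move=> [c vE]; exists (fun i j => t * c i j) => k.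
rewrite vE !mulr_sumr; apply: eq_bigr => i _.
by rewrite mulr_sumr; apply: eq_bigr => j _; rewrite mulrA.
Qed.

Lemma polyhedron_meets_pos_subset {z alpha : 'I_s -> R} :
  nonneg z -> nonneg alpha -> zero_set alpha \subset zero_set z ->
  polyhedron_meets_pos G y z -> polyhedron_meets_pos G y alpha.
Proof.
move=> z_ge0 alpha_ge0 /subsetP sub_za [w [[stoich_wz _] w_gt0]].
(* The junk value 0^-1 = 0 makes the species with alpha k = 0 drop out. *)
pose S := \sum_(k < s) z k / alpha k.
have S_ge0 : 0 <= S by apply: sumr_ge0 => k _; rewrite divr_ge0.
pose t := (1 + S)^-1.
have t_gt0 : 0 < t by rewrite invr_gt0; lra.
have step_pos k : 0 < alpha k + t * (w k - z k).
  have tw_gt0 : 0 < t * w k := mulr_gt0 t_gt0 (w_gt0 k).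
  have [alpha_k0|alpha_k_neq0] := eqVneq (alpha k) 0; last first.
    have alpha_k_gt0 : 0 < alpha k by rewrite lt0r alpha_k_neq0 alpha_ge0.
    have zk_le_S : z k / alpha k <= S.
      rewrite /S (bigD1 k) //= lerDl sumr_ge0 // => j _.
      by rewrite divr_ge0.
    have tz_lt : t * z k < alpha k.
      rewrite mulrC ltr_pdivrMr; last lra.
      by move: zk_le_S; rewrite ler_pdivrMr //; nra.
    by rewrite mulrBr; lra.
  have : k \in zero_set z by apply: sub_za; rewrite inE alpha_k0.
  rewrite inE => /eqP z_k0.
  by rewrite alpha_k0 z_k0 add0r subr0.
exists (fun k => alpha k + t * (w k - z k)); split => //; split.
  have [c stoichE] := in_stoichZ t stoich_wz.
  by exists c => k; rewrite -stoichE addrC addKr.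
by move=> k; apply: ltW.
Qed.

End Network.

Theorem lemma4p6 (R : realType) (s n : nat) (hs : (0 < s)%N) (hn : (0 < n)%N)
    (G : rel 'I_n) (y : 'I_n -> 'I_s -> nat) (hy : injective y)
    (hwr : weakly_reversible G) (Z : {set 'I_s}) (hZ : Z != set0) :
  (siphon G y Z <->
     exists alpha : 'I_s -> R,
       nonneg alpha /\ in_event_variety G y alpha /\ Z = zero_set alpha) /\
  (critical_siphon R G y Z <->
     exists alpha : 'I_s -> R,
       [/\ nonneg alpha, in_event_variety G y alpha, Z = zero_set alpha
         & polyhedron_meets_pos G y alpha]).
Proof.
pose iZ : 'I_s -> R := indicator Z.
have iZ_ok : siphon G y Z ->
    [/\ nonneg iZ, in_event_variety G y iZ & Z = zero_set iZ].
  move=> siphZ; split; first exact: indicator_nonneg.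
    exact: indicator_event_variety.
  by rewrite zero_set_indicator.
split; split.
- by move=> /iZ_ok[? ? ?]; exists iZ.
- by move=> [alpha [_ [ev_alpha Z_alpha]]]; subst Z; exact: siphon_zero_set.
- move=> [/[dup] siphZ /iZ_ok[iZ_ge0 iZ_ev Z_iZ]] [z [z_ge0 [Z_z z_pos]]].
  exists iZ; split => //.
  apply: (polyhedron_meets_pos_subset z_ge0 iZ_ge0 _ z_pos).
  by rewrite -Z_iZ -Z_z.
- move=> [alpha [alpha_ge0 ev_alpha Z_alpha alpha_pos]]; split.
    by subst Z; exact: siphon_zero_set.
  by exists alpha.
Qed.
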